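(* Consider binary variables $Y,X_M,X_1\in\{0,1\}$ with DAG $Y\to X_M$, $Y\to X_1$, $X_M\to X_1$, where $X_1$ is stable (its mechanism $P(X_1\mid X_M,Y)$ and $P(Y)$ are the same in all environments) and $X_M$ is mutable (its mechanism $P^e(X_M\mid Y)$ may be arbitrary in environment $e$). Let $\mathcal{E}$ be the set of all such environments. Then there exist $P(Y)$ and $P(X_1\mid X_M,Y)$ such that $\max_{e\in\mathcal{E}}\mathbb{E}_{P^e}[(Y-f_S(\mathbf{X}))^2]>\max_{e\in\mathcal{E}}\mathbb{E}_{P^e}[(Y-f_\emptyset(\mathbf{X}))^2]$, where $f_S(\boldsymbol x):=\mathbb{E}[Y\mid x_1,do(x_M)]$ and $f_\emptyset(\boldsymbol x):=\mathbb{E}[Y\mid do(x_M)]$.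
   Context: Interventional distributions are defined by truncated factorization: $P(Y,X_1\mid do(X_M=x_M))=P(Y)P(X_1\mid x_M,Y)$, so $\mathbb{E}[Y\mid x_1,do(x_M)]=\frac{P(Y=1)P(x_1\mid x_M,Y=1)}{\sum_{y}P(y)P(x_1\mid x_M,y)}$ and $\mathbb{E}[Y\mid do(x_M)]=\mathbb{E}[Y]$. *)

From HB Require Import structures.
From mathcomp Require Import all_boot all_order all_algebra.
From mathcomp Require Import classical_sets reals.
Set Implicit Arguments. Unset Strict Implicit. Unset Printing Implicit Defensive.
Import Order.TTheory GRing.Theory Num.Theory.
Local Open Scope ring_scope.
Local Open Scope classical_set_scope.

(* Binary variables are encoded by bool (true = 1, false = 0). *)
Section Model.
Variable R : realType.

Definition bern (a : R) (b : bool) : R := if b then a else 1 - a.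

(* Stable part of the model:
   pY = P(Y = 1);  q xm y = P(X1 = 1 | X_M = xm, Y = y).
   Environment e: r y = P^e(X_M = 1 | Y = y). *)
Definition valid_stable (pY : R) (q : bool -> bool -> R) : Prop :=
  0 <= pY <= 1 /\ (forall xm y, 0 <= q xm y <= 1).

Definition environments : set (bool -> R) :=
  [set r | forall y, 0 <= r y <= 1].

Definition joint (pY : R) (q : bool -> bool -> R) (r : bool -> R)
    (y xm x1 : bool) : R :=
  bern pY y * bern (r y) xm * bern (q xm y) x1.

(* Interventional distribution by truncated factorization:
   P(Y = y, X1 = x1 | do(X_M = xm)) = P(y) P(x1 | xm, y). *)
Definition pdo (pY : R) (q : bool -> bool -> R) (xm y x1 : bool) : R :=
  bern pY y * bern (q xm y) x1.

(* f_S(x) = E[Y | x1, do(xm)]  (division by 0 yields 0, MathComp convention) *)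
Definition fS (pY : R) (q : bool -> bool -> R) (xm x1 : bool) : R :=
  pdo pY q xm true x1 / \sum_(y : bool) pdo pY q xm y x1.

Definition fE (pY : R) (q : bool -> bool -> R) (xm x1 : bool) : R :=
  \sum_(y : bool) \sum_(x1' : bool) (y%:R) * pdo pY q xm y x1'.

Definition risk (pY : R) (q : bool -> bool -> R) (r : bool -> R)
    (f : bool -> bool -> R) : R :=
  \sum_(y : bool) \sum_(xm : bool) \sum_(x1 : bool)
    joint pY q r y xm x1 * (y%:R - f xm x1) ^+ 2.

(* Worst-case risk over all environments (a max, attained by compactness). *)
Definition worst_risk (pY : R) (q : bool -> bool -> R)
    (f : bool -> bool -> R) : R :=
  sup [set risk pY q r f | r in environments].

End Model.

From HB Require Import structures.
From mathcomp Require Import all_boot all_order all_algebra.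
From mathcomp Require Import classical_sets reals.
From mathcomp Require Import ring lra.
Set Implicit Arguments. Unset Strict Implicit. Unset Printing Implicit Defensive.
Import Order.TTheory GRing.Theory Num.Theory.
Local Open Scope ring_scope.
Local Open Scope classical_set_scope.

(* The interventional predictor f_emptyset ignores the features: by truncated
   factorization E[Y | do(x_M)] = E[Y] = pY, so f_emptyset is the constant pY
   and its risk is the variance pY (1 - pY) in EVERY environment (the mutable
   mechanism only redistributes mass among the feature values).  Hence its
   worst-case risk is exactly pY (1 - pY).
   The stable-blanket predictor f_S, on the other hand, is calibrated for the
   interventional distribution only; an adversarial environment can couple
   X_M with Y so as to make f_S systematically wrong. *)

Section GeneralFacts.
Variable R : realType.
Implicit Types (pY a c : R) (q : bool -> bool -> R) (r : bool -> R)
  (f : bool -> bool -> R).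

Lemma bern_sum a : \sum_(b : bool) bern a b = 1.
Proof. by rewrite big_bool /bern /= addrC subrK. Qed.

Lemma bern_unit a b : 0 <= a <= 1 -> 0 <= bern a b <= 1.
Proof.
move=> /andP[a0 a1]; case: b => /=; first by rewrite a0 a1.
by rewrite subr_ge0 a1 lerBlDr lerDl.
Qed.

Lemma joint_unit pY q r y xm x1 :
  valid_stable pY q -> environments r -> 0 <= joint pY q r y xm x1 <= 1.
Proof.
move=> [pY01 q01] r01; rewrite /joint.
have /andP[qy0 qy1] := bern_unit x1 (q01 xm y).
have /andP[ry0 ry1] := bern_unit xm (r01 y).
have /andP[pYy0 pYy1] := bern_unit y pY01.
rewrite !mulr_ge0 //= -[1]mulr1 ler_pM ?mulr_ge0 //.
by rewrite -[1]mulr1 ler_pM.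
Qed.

Lemma joint_marginal pY q r y :
  \sum_(xm : bool) \sum_(x1 : bool) joint pY q r y xm x1 = bern pY y.
Proof.
under eq_bigr => xm _ do rewrite /joint -mulr_sumr bern_sum mulr1.
by rewrite -mulr_sumr bern_sum mulr1.
Qed.

(* A constant predictor has the same risk, E[(Y - c)^2], in every
   environment: its risk only depends on the marginal of Y. *)
Lemma risk_const pY q r f c : (forall xm x1, f xm x1 = c) ->
  risk pY q r f = pY * (1 - c) ^+ 2 + (1 - pY) * c ^+ 2.
Proof.
move=> fc; rewrite /risk.
under eq_bigr => y _.
  under eq_bigr => xm _ do under eq_bigr => x1 _ do rewrite fc.
  under eq_bigr => xm _ do rewrite -mulr_suml.
  rewrite -mulr_suml joint_marginal.
over.
by rewrite big_bool /bern /= sub0r sqrrN.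
Qed.

Lemma fE_const pY q xm x1 : fE pY q xm x1 = pY.
Proof.
rewrite /fE big_bool /=.
under eq_bigr => x1' _ do rewrite mul1r.
under [X in _ + X]eq_bigr => x1' _ do rewrite mul0r.
by rewrite big1_eq addr0 /pdo -mulr_sumr bern_sum mulr1.
Qed.

Lemma worst_risk_fE pY q : worst_risk pY q (fE pY q) = pY * (1 - pY).
Proof.
have envE : [set risk pY q r (fE pY q) | r in @environments R] =
            [set pY * (1 - pY)] :> set R.
  apply/seteqP; split => [x [r _ <-] | x ->] /=.
    by rewrite (risk_const pY q r (fE_const pY q)); ring.
  exists (fun=> 0); first by move=> y; rewrite lexx ler01.
  by rewrite (risk_const pY q _ (fE_const pY q)); ring.
by rewrite /worst_risk envE sup1.
Qed.

(* For a valid stable mechanism, the risk in any environment is bounded by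
   the worst-case risk: the set of risks is bounded by the sum of all
   squared errors, since every joint probability lies in [0, 1]. *)
Lemma risk_le_worst_risk pY q r f :
  valid_stable pY q -> environments r ->
  risk pY q r f <= worst_risk pY q f.
Proof.
move=> valid r01; apply: ub_le_sup; last by exists r.
exists (\sum_(y : bool) \sum_(xm : bool) \sum_(x1 : bool)
          (y%:R - f xm x1) ^+ 2) => _ [r' r'01 <-].
apply: ler_sum => y _; apply: ler_sum => xm _; apply: ler_sum => x1 _.
have /andP[_ joint_le1] := joint_unit y xm x1 valid r'01.
by rewrite -[leRHS]mul1r ler_wpM2r ?sqr_ge0.
Qed.

End GeneralFacts.

Section Counterexample.
Variable R : realType.

Definition pY0 : R := 1 / 5.
Definition q0 (xm y : bool) : R := if xm then (if y then 1 else 1 / 5) else 0.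

(* The adversarial environment: X_M = 1 - Y. *)
Definition r0 (y : bool) : R := if y then 0 else 1.

Lemma valid_stable_example : valid_stable pY0 q0.
Proof.
split; first by rewrite /pY0; apply/andP; split; lra.
by move=> [] [] /=; apply/andP; split; lra.
Qed.

Lemma environment_r0 : environments r0.
Proof. by move=> [] /=; rewrite ?lexx ?ler01. Qed.

(* The predictor f_S of the example, evaluated at the four feature values;
   at (x_M, x1) = (0, 1), which has interventional probability 0, it takes
   the conventional value 0 / 0 = 0. *)
Lemma fS_example xm x1 :
  fS pY0 q0 xm x1 =
  if xm then (if x1 then 5 / 9 else 0) else (if x1 then 0 else 1 / 5).
Proof.
by case: xm; case: x1;
  rewrite /fS /pdo big_bool /bern /q0 /pY0 /= ?subrr ?mulr0 ?mul0r //; field.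
Qed.

(* The risk of f_S in the adversarial environment; it exceeds Var(Y) = 4/25. *)
Lemma risk_fS_r0 : risk pY0 q0 r0 (fS pY0 q0) = 4 / 81 + 16 / 125.
Proof.
rewrite /risk !big_bool !fS_example /joint /bern /q0 /r0 /pY0 /=.
by field.
Qed.

End Counterexample.

Theorem mainTheorem3 (R : realType) :
  exists (pY : R) (q : bool -> bool -> R),
    valid_stable pY q /\
    worst_risk pY q (fS pY q) > worst_risk pY q (fE pY q).
Proof.
exists (pY0 R), (q0 R); split; first exact: valid_stable_example.
have worst_fS := risk_le_worst_risk (fS (pY0 R) (q0 R))
  (valid_stable_example R) (environment_r0 R).
rewrite risk_fS_r0 in worst_fS.
rewrite worst_risk_fE /pY0; lra.
Qed.
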